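(* For integers $n>1$ and positive integers $a\neq b$, $\chi_{ld}(K_{a,b}[\overline{K_{n}}])=2$.
   Context: All graphs are finite, simple and undirected. For a graph $G=(V,E)$ of order $N$ without isolated vertices, a bijection $f\colon V\to\{1,2,\dots,N\}$ is a local distance antimagic labeling if $w(u)\neq w(v)$ for every edge $uv$, where $w(u)=\sum_{x\in N(u)}f(x)$ and $N(u)$ is the open neighborhood of $u$. $\chi_{ld}(G)$ is the minimum number of distinct weights over all local distance antimagic labelings of $G$. $K_{a,b}$ is the complete bipartite graph, $\overline{K_n}$ is the edgeless graph on $n$ vertices. The lexicographic product $G[H]$ has vertex set $V(G)\times V(H)$, with $(g,h)$ adjacent to $(g',h')$ iff $gg'\in E(G)$, or $g=g'$ and $hh'\in E(H)$. *)

From mathcomp Require Import all_boot.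
Set Implicit Arguments. Unset Strict Implicit. Unset Printing Implicit Defensive.

(* A simple graph: a finite vertex type T with an adjacency relation e : rel T
   (assumed symmetric and irreflexive; all graphs built below are). *)


Definition Kbip (a b : nat) : rel ('I_a + 'I_b)%type :=
  fun x y => match x, y with
             | inl _, inr _ => true
             | inr _, inl _ => true
             | _, _ => false
             end.
Arguments Kbip : clear implicits.

Definition Kbar (n : nat) : rel 'I_n := fun _ _ => false.
Arguments Kbar : clear implicits.

Definition lexprod (T1 T2 : finType) (e1 : rel T1) (e2 : rel T2) : rel (T1 * T2)%type :=
  fun x y => e1 x.1 y.1 || ((x.1 == y.1) && e2 x.2 y.2).

(* A labeling is a bijection f : V -> {1,...,N}; we encode it as a bijection
   g : V -> 'I_N (N = #|V|) with f x = g x + 1. *)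
Definition label (T : finType) (g : {ffun T -> 'I_#|T|}) (x : T) : nat := (g x).+1.

Definition weight (T : finType) (e : rel T) (g : {ffun T -> 'I_#|T|}) (u : T) : nat :=
  \sum_(x : T | e u x) label g x.

Definition is_ld_antimagic (T : finType) (e : rel T) (g : {ffun T -> 'I_#|T|}) : bool :=
  injectiveb g && [forall u, forall v, e u v ==> (weight e g u != weight e g v)].

Definition num_weights (T : finType) (e : rel T) (g : {ffun T -> 'I_#|T|}) : nat :=
  size (undup [seq weight e g u | u <- enum T]).

(* chi_ld(G): minimum number of distinct weights over all local distance
   antimagic labelings (the default #|T| is an upper bound on num_weights and
   is only reached vacuously if no such labeling exists). *)
Definition chi_ld (T : finType) (e : rel T) : nat :=
  \big[minn/#|T|]_(g : {ffun T -> 'I_#|T|} | is_ld_antimagic e g) num_weights e g.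

From mathcomp Require Import all_boot all_order.
From mathcomp Require Import perm zify.
Import Order.TTheory.

(* In K_{a,b}[K_n-bar] every vertex is adjacent to exactly the vertices of the other
   side, so its weight is the label sum of the opposite side. Hence there are at most
   two weights, and a labeling is local distance antimagic iff the two side sums differ;
   adjacent vertices force at least two weights. If a labeling has equal side sums,
   swapping the labels of one vertex from each side breaks the tie. *)

Section WeightCounting.
Context {T : finType} {e : rel T}.

Lemma num_weights_le_size (g : {ffun T -> 'I_#|T|}) (s : seq nat) :
  (forall u, weight e g u \in s) -> num_weights e g <= size s.
Proof.
move=> ws; apply: uniq_leq_size; first exact: undup_uniq.
by move=> w; rewrite mem_undup => /mapP [u _ ->].
Qed.

Lemma num_weights_gt1 [g : {ffun T -> 'I_#|T|}] [u v : T] :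
  is_ld_antimagic e g -> e u v -> 1 < num_weights e g.
Proof.
case/andP=> _ /forallP /(_ u) /forallP /(_ v) /implyP wuv euv.
apply: (@uniq_leq_size _ [:: weight e g u; weight e g v]).
  by rewrite /= inE wuv.
by move=> w; rewrite !inE mem_undup => /orP [] /eqP ->; rewrite map_f ?mem_enum.
Qed.

Lemma chi_ld_le_num_weights [g : {ffun T -> 'I_#|T|}] :
  is_ld_antimagic e g -> chi_ld e <= num_weights e g.
Proof. exact: (bigmin_le_cond #|T| (num_weights e)). Qed.

Lemma chi_ld_gt1 u v : u != v -> e u v -> 1 < chi_ld e.
Proof.
move=> neq_uv euv; apply/(@bigmin_geP _ nat); split=> [|g ag].
  by apply/card_gt1P; exists u, v.
exact: (num_weights_gt1 ag euv).
Qed.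

End WeightCounting.

Lemma sum_tperm_in_out (T : finType) (A : pred T) (F : T -> nat) u v :
  A u -> ~~ A v ->
  \sum_(x | A x) F (tperm u v x) + F u = \sum_(x | A x) F x + F v.
Proof.
move=> Au nAv; rewrite !(bigD1 u Au) /= tpermL.
have -> : \sum_(x | A x && (x != u)) F (tperm u v x) =
          \sum_(x | A x && (x != u)) F x.
  apply: eq_bigr => x /andP [Ax neq_xu]; rewrite tpermD // eq_sym //.
  by apply: contraNneq nAv => <-.
lia.
Qed.

Section CompleteBipartite.
Variables (T : finType) (A : pred T) (e : rel T).
Hypothesis eA : forall x y, e x y = (A x != A y).

Definition part_sum (g : {ffun T -> 'I_#|T|}) (s : bool) : nat :=
  \sum_(x | A x == s) label g x.

Lemma weight_complete_bipartite (g : {ffun T -> 'I_#|T|}) u :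
  weight e g u = part_sum g (~~ A u).
Proof. by apply: eq_bigl => x; rewrite eA; case: (A u); case: (A x). Qed.

Lemma num_weights_complete_bipartite (g : {ffun T -> 'I_#|T|}) : num_weights e g <= 2.
Proof.
apply: (@num_weights_le_size _ _ _ [:: part_sum g true; part_sum g false]) => u.
by rewrite weight_complete_bipartite !inE; case: (A u); rewrite eqxx ?orbT.
Qed.

Lemma ld_antimagic_complete_bipartite [g : {ffun T -> 'I_#|T|}] :
  injective g -> part_sum g true != part_sum g false -> is_ld_antimagic e g.
Proof.
move=> inj_g neq_parts; rewrite /is_ld_antimagic (introT (injectiveP _) inj_g).
apply/forallP => u; apply/forallP => v; apply/implyP.
rewrite eA !weight_complete_bipartite.
by case: (A u); case: (A v) => //= _; rewrite eq_sym.
Qed.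

Lemma exists_labeling_unequal_parts [u v : T] : A u -> ~~ A v ->
  exists g : {ffun T -> 'I_#|T|}, injective g /\ part_sum g true != part_sum g false.
Proof.
move=> Au nAv.
pose g0 : {ffun T -> 'I_#|T|} := [ffun x => enum_rank x].
have inj_g0 : injective g0 by move=> x y; rewrite !ffunE => /enum_rank_inj.
clearbody g0.
have [eq0|] := eqVneq (part_sum g0 true) (part_sum g0 false); last by exists g0.
pose g1 : {ffun T -> 'I_#|T|} := [ffun x => g0 (tperm u v x)].
have inj_g1 : injective g1 by move=> x y; rewrite !ffunE => /inj_g0; apply: perm_inj.
exists g1; split=> //; apply/eqP => eq1.
have sumA : part_sum g1 true + label g0 u = part_sum g0 true + label g0 v.
  rewrite -(@sum_tperm_in_out _ (fun x => A x == true) (label g0) u v)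
    ?Au ?(negbTE nAv) //.
  by congr (_ + _); apply: eq_bigr => x _; rewrite /label ffunE.
have sumB : part_sum g1 false + label g0 v = part_sum g0 false + label g0 u.
  rewrite -(@sum_tperm_in_out _ (fun x => A x == false) (label g0) v u)
    ?Au ?(negbTE nAv) //.
  by congr (_ + _); apply: eq_bigr => x _; rewrite /label ffunE tpermC.
have eq_labels : label g0 u = label g0 v by rewrite eq0 eq1 in sumA; lia.
have /inj_g0 eq_uv : g0 u = g0 v := val_inj (succn_inj eq_labels).
by move: nAv; rewrite -eq_uv Au.
Qed.

Lemma chi_ld_complete_bipartite u v : A u -> ~~ A v -> chi_ld e = 2.
Proof.
move=> Au nAv; have [g [inj_g neq_parts]] := exists_labeling_unequal_parts Au nAv.
have ag := ld_antimagic_complete_bipartite inj_g neq_parts.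
apply/eqP; rewrite eqn_leq (leq_trans (chi_ld_le_num_weights ag)).
- by rewrite (@chi_ld_gt1 _ e u v) ?eA ?Au //; apply: contraNneq nAv => <-.
- exact: num_weights_complete_bipartite.
Qed.

End CompleteBipartite.

Definition is_inl {S1 S2 : Type} (z : S1 + S2) : bool :=
  if z is inl _ then true else false.

Lemma lexprod_Kbip_Kbar a b n (x y : ('I_a + 'I_b) * 'I_n) :
  lexprod (Kbip a b) (Kbar n) x y = (is_inl x.1 != is_inl y.1).
Proof. by case: x y => [[i|i] k] [[j|j] l]; rewrite /lexprod /= ?andbF. Qed.

Theorem mainTheorem7 (n a b : nat) :
  1 < n -> 0 < a -> 0 < b -> a != b ->
  chi_ld (lexprod (Kbip a b) (Kbar n)) = 2.
Proof.
move=> n_gt1 a_gt0 b_gt0 _; have n_gt0 := ltnW n_gt1.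
apply: (@chi_ld_complete_bipartite _ _ _ (@lexprod_Kbip_Kbar a b n)
          (inl (Ordinal a_gt0), Ordinal n_gt0) (inr (Ordinal b_gt0), Ordinal n_gt0)) => //.
Qed.
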